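(* Let $k$ be a commutative ring and $R$ a commutative $k$-algebra with $k$-linear involution, such that $2$ is invertible in $R$ and $R$ is flat over $k$. Let $M$ be an involutive $R$-bimodule. Then \[\pi_0\big(\underline{B^k_*(R,R\otimes_kR,M)}^{\mathrm{fix}}(C_2/C_2)\big)\cong R\otimes_{R^{ie}}M.\]
   Context: An involutive $R$-bimodule is an $R$-bimodule $M$ with involution $m\mapsto\bar m$ such that $\overline{amb}=\bar b\bar m\bar a$. $B^k_*(R,R\otimes_kR,M)$ is the simplicial two-sided bar construction with $n$-simplices $R\otimes_k(R\otimes_kR)^{\otimes_kn}\otimes_kM$, where $R$ is a right $R\otimes_kR$-module via $a\cdot(x\otimes y)=yax$ and $M$ a left module via $(x\otimes y)m=xmy$; $C_2$ acts levelwise diagonally via the involution on $R$, $x\otimes y\mapsto\bar y\otimes\bar x$ on $R\otimes_kR$, and the involution on $M$. For a $k$-module $L$ with involution, $\underline L^{\mathrm{fix}}$ is the $C_2$-Mackey functor with value $L^{C_2}$ at $C_2/C_2$ and $L$ at $C_2/e$; so $\underline{B^k_*(\cdots)}^{\mathrm{fix}}(C_2/C_2)$ is the simplicial $k$-module of levelwise $C_2$-fixed points. $R^{ie}=R\otimes_kR^{\mathrm{op}}\otimes_kk[C_2]$ is the involutive enveloping algebra, with multiplication $(a\otimes b\otimes\tau^i)(c\otimes d\otimes\tau^j)=((a\otimes b)\cdot\tau^i(c\otimes d))\otimes\tau^{i+j}$, $\tau(c\otimes d)=\bar d\otimes\bar c$; involutive bimodules are $R^{ie}$-modules ($a\otimes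 b$ acts by $m\mapsto amb$, $\tau$ by the involution), and $R$ is one such. *)

From HB Require Import structures.
From mathcomp Require Import all_boot all_order all_algebra.
Set Implicit Arguments. Unset Strict Implicit. Unset Printing Implicit Defensive.
Import GRing.Theory.
Local Open Scope ring_scope.

Section Defs.
Variable k : comNzRingType.

Definition klinear (A B : lmodType k) (f : A -> B) : Prop :=
  forall (c : k) (x y : A), f (c *: x + y) = c *: f x + f y.

Definition kbilinear (A B W : lmodType k) (f : A -> B -> W) : Prop :=
  (forall b, klinear (fun a => f a b)) /\ (forall a, klinear (f a)).

Definition is_tensor (A B T : lmodType k) (t : A -> B -> T) : Prop :=
  kbilinear t /\
  forall (W : lmodType k) (f : A -> B -> W), kbilinear f ->
    (exists g : T -> W, klinear g /\ forall a b, g (t a b) = f a b) /\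
    (forall g1 g2 : T -> W, klinear g1 -> klinear g2 ->
       (forall a b, g1 (t a b) = g2 (t a b)) -> forall x, g1 x = g2 x).

Definition flat (R : lmodType k) : Prop :=
  forall (A B : lmodType k) (f : A -> B), klinear f -> injective f ->
  forall (TA TB : lmodType k) (ta : R -> A -> TA) (tb : R -> B -> TB),
    is_tensor ta -> is_tensor tb ->
    forall g : TA -> TB, klinear g -> (forall r a, g (ta r a) = tb r (f a)) ->
    injective g.

Definition is_alg_involution (R : comAlgType k) (conj : R -> R) : Prop :=
  [/\ klinear conj, (forall x y, conj (x * y) = conj y * conj x),
      conj 1 = 1 & (forall x, conj (conj x) = x)].

Definition is_bimodule (R : comAlgType k) (M : lmodType k)
    (lm : R -> M -> M) (rm : M -> R -> M) : Prop :=
  (forall a m n, lm a (m + n) = lm a m + lm a n) /\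
  (forall a b m, lm (a + b) m = lm a m + lm b m) /\
  (forall a b m, lm (a * b) m = lm a (lm b m)) /\
  (forall m, lm 1 m = m) /\
  (forall a m n, rm (m + n) a = rm m a + rm n a) /\
  (forall a b m, rm m (a + b) = rm m a + rm m b) /\
  (forall a b m, rm m (a * b) = rm (rm m a) b) /\
  (forall m, rm m 1 = m) /\
  (forall a b m, lm a (rm m b) = rm (lm a m) b) /\
  (forall (c : k) m, lm (c%:A) m = c *: m) /\
  (forall (c : k) m, rm m (c%:A) = c *: m).

Definition is_involutive_bimodule (R : comAlgType k) (conj : R -> R)
    (M : lmodType k) (lm : R -> M -> M) (rm : M -> R -> M) (invM : M -> M) : Prop :=
  [/\ is_bimodule lm rm,
      (forall m n, invM (m + n) = invM m + invM n),
      (forall m, invM (invM m) = m) &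
      (forall a b m, invM (lm a (rm m b)) = lm (conj b) (rm (invM m) (conj a)))].

(* Right action of the pure tensor  a (x) b (x) tau^i  of R^{ie} on R:
   r.(a (x) b) = b r a  (the given right R (x)_k R-module structure),
   r.tau = conj r. *)
Definition ie_ract (R : comAlgType k) (conj : R -> R)
    (r a b : R) (i : bool) : R :=
  if i then conj (b * r * a) else b * r * a.

(* Left action of  a (x) b (x) tau^i  on an involutive bimodule:
   (a (x) b (x) tau^i) m = a (tau^i m) b. *)
Definition ie_lact (R : comAlgType k) (M : lmodType k)
    (lm : R -> M -> M) (rm : M -> R -> M) (invM : M -> M)
    (a b : R) (i : bool) (m : M) : M :=
  lm a (rm (if i then invM m else m) b).

(* R^{ie}-balanced k-bilinear maps R x M -> W (balancedness on the pure
   tensors a (x) b (x) tau^i, which span R^{ie} over k) *)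
Definition ie_balanced (R : comAlgType k) (conj : R -> R)
    (M : lmodType k) (lm : R -> M -> M) (rm : M -> R -> M) (invM : M -> M)
    (W : lmodType k) (f : R -> M -> W) : Prop :=
  kbilinear f /\
  forall r a b i m, f (ie_ract conj r a b i) m = f r (ie_lact lm rm invM a b i m).

Definition is_tensor_ie (R : comAlgType k) (conj : R -> R)
    (M : lmodType k) (lm : R -> M -> M) (rm : M -> R -> M) (invM : M -> M)
    (Q : lmodType k) (q : R -> M -> Q) : Prop :=
  ie_balanced conj lm rm invM q /\
  forall (W : lmodType k) (f : R -> M -> W), ie_balanced conj lm rm invM f ->
    (exists g : Q -> W, klinear g /\ forall r m, g (q r m) = f r m) /\
    (forall g1 g2 : Q -> W, klinear g1 -> klinear g2 ->
       (forall r m, g1 (q r m) = g2 (q r m)) -> forall x, g1 x = g2 x).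

End Defs.

(* Since 2 is invertible, x |-> (x + tau x)/2 retracts each level onto its C2-fixed points, so
   pi_0 of the fixed points is X0^C2 modulo the images under d0 - d1 of fixed 1-simplices.  The
   map phi induced by q kills these boundaries.  Conversely the averaged class map
   (r, m) |-> [sym (r (x) m)] is R^ie-balanced: b r a (x) m and r (x) a m b are related by the
   boundary of the fixed 1-simplex z + tau1 z with z = r/2 (x) (a (x) b) (x) m, and the relation
   for tau holds because sym o tau0 = sym.  So it factors through Q, inverting phi. *)
From HB Require Import structures.
From mathcomp Require Import all_boot all_order all_algebra.
From Stdlib Require Import ClassicalEpsilon.
Set Implicit Arguments. Unset Strict Implicit. Unset Printing Implicit Defensive.
Import GRing.Theory.
Local Open Scope ring_scope.

Section KLinear.
Variable k : comNzRingType.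
Implicit Types A B C D S T U W : lmodType k.

Lemma klinD A B (f : A -> B) : klinear f -> forall x y, f (x + y) = f x + f y.
Proof. by move=> hf x y; have := hf 1 x y; rewrite !scale1r. Qed.

Lemma klin0 A B (f : A -> B) : klinear f -> f 0 = 0.
Proof. by move=> hf; apply: (addrI (f 0)); rewrite -(klinD hf) !addr0. Qed.

Lemma klinN A B (f : A -> B) : klinear f -> forall x, f (- x) = - f x.
Proof.
by move=> hf x; have := hf (-1) x 0; rewrite addr0 (klin0 hf) addr0 !scaleN1r.
Qed.

Lemma klinB A B (f : A -> B) : klinear f -> forall x y, f (x - y) = f x - f y.
Proof. by move=> hf x y; rewrite (klinD hf) (klinN hf). Qed.

Lemma klin_id A : klinear (@id A).
Proof. by []. Qed.

Lemma klin_comp A B C (f : B -> C) (g : A -> B) :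
  klinear f -> klinear g -> klinear (f \o g).
Proof. by move=> hf hg c x y; rewrite /= hg hf. Qed.

Lemma klin_add A B (f g : A -> B) :
  klinear f -> klinear g -> klinear (fun x => f x + g x).
Proof. by move=> hf hg c x y; rewrite hf hg scalerDr addrACA. Qed.

Lemma kbilinear_comp A B T W (t : A -> B -> T) (g : T -> W) :
  kbilinear t -> klinear g -> kbilinear (fun a b => g (t a b)).
Proof. by move=> [ht1 ht2] hg; split=> ?; apply: klin_comp. Qed.

Lemma tensor_bilinear A B T (t : A -> B -> T) : is_tensor t -> kbilinear t.
Proof. by case. Qed.

Lemma tensor_lift A B T (t : A -> B -> T) W (f : A -> B -> W) :
  is_tensor t -> kbilinear f ->
  exists g : T -> W, klinear g /\ forall a b, g (t a b) = f a b.
Proof. by case=> _ ht hf; case: (ht W f hf). Qed.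

Lemma tensor_ext A B T (t : A -> B -> T) W (g1 g2 : T -> W) :
  is_tensor t -> klinear g1 -> klinear g2 ->
  (forall a b, g1 (t a b) = g2 (t a b)) -> g1 =1 g2.
Proof.
case=> tb ht hg1 hg2 e.
by case: (ht W _ (kbilinear_comp tb hg1)) => _ /(_ g1 g2 hg1 hg2 e).
Qed.

Lemma tensor3_ext A B C D S U T W (s : A -> B -> S) (u : S -> C -> U) (t : D -> U -> T)
    (g1 g2 : T -> W) :
  is_tensor s -> is_tensor u -> is_tensor t -> klinear g1 -> klinear g2 ->
  (forall r x y m, g1 (t r (u (s x y) m)) = g2 (t r (u (s x y) m))) -> g1 =1 g2.
Proof.
move=> hs hu ht hg1 hg2 e; apply: (tensor_ext ht) => // r.
have tr := (tensor_bilinear ht).2 r.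
apply: (tensor_ext hu (g1 := g1 \o t r) (g2 := g2 \o t r)); try exact: klin_comp.
move=> a m; have ua := (tensor_bilinear hu).1 m.
apply: (tensor_ext hs (g1 := g1 \o t r \o u^~ m) (g2 := g2 \o t r \o u^~ m));
  by [apply: klin_comp => //; apply: klin_comp | move=> x y; apply: e].
Qed.
End KLinear.

Section Symmetrize.
Variables (k : comNzRingType) (V : lmodType k) (tau half : V -> V).
Hypotheses (tau_lin : klinear tau) (half_lin : klinear half).
Hypotheses (tauK : involutive tau) (half_tau : forall x, tau (half x) = half (tau x)).
Hypothesis half_addK : forall x, half x + half x = x.

Definition symmetrize x := half x + half (tau x).

Lemma symmetrize_linear : klinear symmetrize.
Proof. exact: klin_add half_lin (klin_comp half_lin tau_lin). Qed.

Lemma symmetrizeE x : symmetrize x = half x + tau (half x).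
Proof. by rewrite half_tau. Qed.

Lemma symmetrize_fixed x : tau (symmetrize x) = symmetrize x.
Proof. by rewrite /symmetrize (klinD tau_lin) !half_tau tauK addrC. Qed.

Lemma symmetrize_id x : tau x = x -> symmetrize x = x.
Proof. by rewrite /symmetrize => ->. Qed.

Lemma symmetrize_tau x : symmetrize (tau x) = symmetrize x.
Proof. by rewrite /symmetrize tauK addrC. Qed.
End Symmetrize.

(* Generic quotients need a boolean equivalence; membership in a submodule is not decidable. *)
Definition asbool (P : Prop) : bool := if excluded_middle_informative P then true else false.

Lemma asboolP (P : Prop) : reflect P (asbool P).
Proof. by rewrite /asbool; case: excluded_middle_informative => h; constructor. Qed.

Local Open Scope quotient_scope.

Section SubmoduleQuotient.
Variables (k : comNzRingType) (V : lmodType k) (P : V -> Prop).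
Hypotheses (P0 : P 0) (PL : forall c x y, P x -> P y -> P (c *: x + y)).

Let PD x y : P x -> P y -> P (x + y).
Proof. by move=> hx hy; have := PL 1 hx hy; rewrite scale1r. Qed.

Let PZ c x : P x -> P (c *: x).
Proof. by move=> hx; have := PL c hx P0; rewrite addr0. Qed.

Definition quot_rel (x y : V) := asbool (P (x - y)).

Lemma quot_rel_refl : reflexive quot_rel.
Proof. by move=> x; apply/asboolP; rewrite subrr. Qed.

Lemma quot_rel_sym : symmetric quot_rel.
Proof. by move=> x y; apply/asboolP/asboolP => /(PZ (-1)); rewrite scaleN1r opprB. Qed.

Lemma quot_rel_trans : transitive quot_rel.
Proof.
by move=> y x z /asboolP hxy /asboolP hyz; apply/asboolP; rewrite -[x](subrK y) -addrA; exact: PD.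
Qed.

Canonical quot_equiv := EquivRel quot_rel quot_rel_refl quot_rel_sym quot_rel_trans.

Definition quot := {eq_quot quot_rel}.
HB.instance Definition _ := Choice.on quot.

Definition quot_pi (x : V) : quot := \pi x.

Lemma quot_piP x y : quot_pi x = quot_pi y <-> P (x - y).
Proof. by split=> [/eqquotP/asboolP | h]; last apply/eqquotP/asboolP. Qed.

Lemma quot_pi_repr x : P (repr (quot_pi x) - x).
Proof. by apply/quot_piP; rewrite /quot_pi reprK. Qed.

Lemma quot_piW (Q : quot -> Prop) : (forall x, Q (quot_pi x)) -> forall a, Q a.
Proof. by move=> hQ; elim/quotW. Qed.

Definition quot_add (a b : quot) := quot_pi (repr a + repr b).
Definition quot_opp (a : quot) := quot_pi (- repr a).
Definition quot_scale (c : k) (a : quot) := quot_pi (c *: repr a).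

Lemma quot_addE x y : quot_add (quot_pi x) (quot_pi y) = quot_pi (x + y).
Proof. by apply/quot_piP; rewrite opprD addrACA; apply: PD; apply: quot_pi_repr. Qed.

Lemma quot_oppE x : quot_opp (quot_pi x) = quot_pi (- x).
Proof. by apply/quot_piP; rewrite opprK addrC -opprB -scaleN1r; apply: PZ; apply: quot_pi_repr. Qed.

Lemma quot_scaleE c x : quot_scale c (quot_pi x) = quot_pi (c *: x).
Proof. by apply/quot_piP; rewrite -scalerBr; apply: PZ; apply: quot_pi_repr. Qed.

Lemma quot_addA : associative quot_add.
Proof. by do 3![elim/quot_piW=> ?]; rewrite !quot_addE addrA. Qed.

Lemma quot_addC : commutative quot_add.
Proof. by do 2![elim/quot_piW=> ?]; rewrite !quot_addE addrC. Qed.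

Lemma quot_add0 : left_id (quot_pi 0) quot_add.
Proof. by elim/quot_piW=> x; rewrite quot_addE add0r. Qed.

Lemma quot_addN : left_inverse (quot_pi 0) quot_opp quot_add.
Proof. by elim/quot_piW=> x; rewrite quot_oppE quot_addE addNr. Qed.

HB.instance Definition _ := GRing.isZmodule.Build quot quot_addA quot_addC quot_add0 quot_addN.

Lemma quot_scaleA a b v : quot_scale a (quot_scale b v) = quot_scale (a * b) v.
Proof. by elim/quot_piW: v => x; rewrite !quot_scaleE scalerA. Qed.

Lemma quot_scale1 : left_id 1 quot_scale.
Proof. by elim/quot_piW=> x; rewrite quot_scaleE scale1r. Qed.

Lemma quot_scaleDr : right_distributive quot_scale quot_add.
Proof. by move=> c; do 2![elim/quot_piW=> ?]; rewrite !(quot_addE, quot_scaleE) scalerDr. Qed.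

Lemma quot_scaleDl v : {morph quot_scale^~ v : a b / a + b >-> quot_add a b}.
Proof. by elim/quot_piW: v => x a b; rewrite !(quot_addE, quot_scaleE) scalerDl. Qed.

HB.instance Definition _ :=
  GRing.Zmodule_isLmodule.Build k quot quot_scaleA quot_scale1 quot_scaleDr quot_scaleDl.

Lemma quot_pi_linear : klinear quot_pi.
Proof. by move=> c x y; rewrite -quot_addE -quot_scaleE. Qed.

Lemma quot_pi_eq0 x : quot_pi x = 0 <-> P x.
Proof. by rewrite (quot_piP x 0) subr0. Qed.

Lemma quot_pi_surj (a : quot) : exists x, quot_pi x = a.
Proof. by exists (repr a); apply: reprK. Qed.

Lemma quot_lift (W : lmodType k) (g : V -> W) : klinear g -> (forall x, P x -> g x = 0) ->
  exists gq : quot -> W, klinear gq /\ forall x, gq (quot_pi x) = g x.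
Proof.
move=> hg gP.
have g_repr x : g (repr (quot_pi x)) = g x.
  by apply/eqP; rewrite -subr_eq0 -(klinB hg) gP //; apply: quot_pi_repr.
exists (g \o repr); split=> [c|]; last exact: g_repr.
by do 2![elim/quot_piW=> ?]; rewrite -quot_pi_linear /= !g_repr hg.
Qed.
End SubmoduleQuotient.

Section BarConstruction.
Variables (k : comNzRingType) (R : comAlgType k) (conj : R -> R).
Variables (M : lmodType k) (lm : R -> M -> M) (rm : M -> R -> M) (invM : M -> M).
Hypotheses (Hconj : is_alg_involution conj) (HM : is_involutive_bimodule conj lm rm invM).
Variable h : R.
Hypothesis h_half : 2%:R * h = 1.
Variables (X0 : lmodType k) (t0 : R -> M -> X0) (S : lmodType k) (s : R -> R -> S).
Variables (U : lmodType k) (u : S -> M -> U) (X1 : lmodType k) (t1 : R -> U -> X1).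
Hypotheses (Ht0 : is_tensor t0) (Hs : is_tensor s) (Hu : is_tensor u) (Ht1 : is_tensor t1).
Variables (d0 d1 : X1 -> X0) (tau0 : X0 -> X0) (tau1 : X1 -> X1).
Hypotheses (Hd0 : klinear d0) (Hd1 : klinear d1) (Htau0 : klinear tau0) (Htau1 : klinear tau1).
Hypothesis d0E : forall r x y m, d0 (t1 r (u (s x y) m)) = t0 (y * r * x) m.
Hypothesis d1E : forall r x y m, d1 (t1 r (u (s x y) m)) = t0 r (lm x (rm m y)).
Hypothesis tau0E : forall r m, tau0 (t0 r m) = t0 (conj r) (invM m).
Hypothesis tau1E : forall r x y m,
  tau1 (t1 r (u (s x y) m)) = t1 (conj r) (u (s (conj y) (conj x)) (invM m)).

Let conjM : forall x y, conj (x * y) = conj y * conj x.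
Proof. by case: Hconj. Qed.

Let conjK : involutive conj.
Proof. by case: Hconj. Qed.

Let invMK : involutive invM.
Proof. by case: HM. Qed.

Lemma conj_half : conj h = h.
Proof.
have [conj_lin _ conj1 _] := Hconj.
have conj2 : conj 2%:R = 2%:R by rewrite mulr2n (klinD conj_lin) conj1.
by rewrite -[conj h]mulr1 -h_half mulrA -{1}conj2 -conjM h_half conj1 mul1r.
Qed.

Lemma conj_mul_half r : conj (h * r) = h * conj r.
Proof. by rewrite conjM conj_half mulrC. Qed.

Lemma mulr_half_addK r : h * r + h * r = r.
Proof. by rewrite -mulrDl -mulr2n -mulr_natl h_half mul1r. Qed.

Lemma X1_ext (W : lmodType k) (g1 g2 : X1 -> W) : klinear g1 -> klinear g2 ->
  (forall r x y m, g1 (t1 r (u (s x y) m)) = g2 (t1 r (u (s x y) m))) -> g1 =1 g2.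
Proof. exact: (tensor3_ext Hs Hu Ht1). Qed.

Lemma tau0K : involutive tau0.
Proof.
apply: (tensor_ext Ht0 (g1 := tau0 \o tau0) (g2 := id)) => [||r m /=].
- exact: klin_comp.
- exact: klin_id.
by rewrite !tau0E conjK invMK.
Qed.

Lemma tau1K : involutive tau1.
Proof.
apply: (X1_ext (g1 := tau1 \o tau1) (g2 := id)) => [||r x y m /=].
- exact: klin_comp.
- exact: klin_id.
by rewrite !tau1E !conjK invMK.
Qed.

Lemma d0_tau y : tau0 (d0 y) = d0 (tau1 y).
Proof.
apply: (X1_ext (g1 := tau0 \o d0) (g2 := d0 \o tau1)); try exact: klin_comp.
by move=> r x z m /=; rewrite tau1E !d0E tau0E !conjM mulrA.
Qed.

Lemma d1_tau y : tau0 (d1 y) = d1 (tau1 y).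
Proof.
apply: (X1_ext (g1 := tau0 \o d1) (g2 := d1 \o tau1)); try exact: klin_comp.
by case: HM => _ _ _ invM_act r x z m /=; rewrite tau1E !d1E tau0E invM_act.
Qed.

Definition boundary (x : X0) := exists y, tau1 y = y /\ x = d0 y - d1 y.

Lemma boundary0 : boundary 0.
Proof. by exists 0; rewrite (klin0 Htau1) (klin0 Hd0) (klin0 Hd1) subrr. Qed.

Lemma boundary_linear c x y : boundary x -> boundary y -> boundary (c *: x + y).
Proof.
move=> [y1 [fix1 ->]] [y2 [fix2 ->]]; exists (c *: y1 + y2); split.
  by rewrite Htau1 fix1 fix2.
by rewrite Hd0 Hd1 scalerBr opprD [RHS]addrACA.
Qed.

Local Notation cls := (quot_pi boundary0 boundary_linear).

Variable half : X0 -> X0.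
Hypotheses (half_lin : klinear half) (halfE : forall r m, half (t0 r m) = t0 (h * r) m).

Lemma half_tau x : tau0 (half x) = half (tau0 x).
Proof.
apply: (tensor_ext Ht0 (g1 := tau0 \o half) (g2 := half \o tau0)); try exact: klin_comp.
by move=> r m /=; rewrite halfE !tau0E halfE conj_mul_half.
Qed.

Lemma half_addK x : half x + half x = x.
Proof.
apply: (tensor_ext Ht0 (g1 := fun x => half x + half x) (g2 := id)) => [||r m].
- exact: klin_add.
- exact: klin_id.
by rewrite halfE -(klinD ((tensor_bilinear Ht0).1 m)) mulr_half_addK.
Qed.

Local Notation sym := (symmetrize tau0 half).

Lemma boundary_sym_face r a b m :
  boundary (sym (t0 (b * r * a) m) - sym (t0 r (lm a (rm m b)))).
Proof.
pose z := t1 (h * r) (u (s a b) m).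
exists (z + tau1 z); split; first by rewrite (klinD Htau1) tau1K addrC.
rewrite !(symmetrizeE half_tau) (klinD Hd0) (klinD Hd1) -d0_tau -d1_tau /z d0E d1E !halfE.
by rewrite !mulrA (mulrC b h) opprD.
Qed.

Definition sym_class (r : R) (m : M) := cls (sym (t0 r m)).

Lemma sym_class_balanced : ie_balanced conj lm rm invM sym_class.
Proof.
split.
  apply: kbilinear_comp (tensor_bilinear Ht0) (klin_comp _ _).
    exact: quot_pi_linear.
  by apply: symmetrize_linear.
have face r a b m : sym_class (b * r * a) m = sym_class r (lm a (rm m b)).
  by apply/quot_piP; apply: boundary_sym_face.
move=> r a b [] m; rewrite /ie_ract /ie_lact -face; last by [].
by rewrite /sym_class -[m in LHS]invMK -tau0E (symmetrize_tau _ tau0K).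
Qed.

Variables (Q : lmodType k) (q : R -> M -> Q) (phi : X0 -> Q).
Hypotheses (Hq : is_tensor_ie conj lm rm invM q).
Hypotheses (phi_lin : klinear phi) (phiE : forall r m, phi (t0 r m) = q r m).

Lemma q_conj r m : q (conj r) (invM m) = q r m.
Proof.
have [[_ q_bal] _] := Hq.
case: HM => [[_ [_ [_ [lm1 [_ [_ [_ [rm1 _]]]]]]]] _ _ _].
by have := q_bal r 1 1 true (invM m); rewrite /ie_ract /ie_lact mul1r mulr1 lm1 rm1 invMK.
Qed.

Lemma phi_sym x : phi (sym x) = phi x.
Proof.
apply: (tensor_ext Ht0 (g1 := phi \o sym)) => [||r m /=].
- exact: klin_comp (symmetrize_linear _ _).
- exact: phi_lin.
rewrite /symmetrize tau0E !halfE (klinD phi_lin) !phiE -conj_mul_half q_conj.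
by rewrite -(klinD ((Hq.1.1).1 m)) mulr_half_addK.
Qed.

Lemma phi_face y : phi (d0 y) = phi (d1 y).
Proof.
apply: (X1_ext (g1 := phi \o d0) (g2 := phi \o d1)); try exact: klin_comp.
by move=> r x z m /=; rewrite d0E d1E !phiE; apply: (Hq.1.2 r x z false m).
Qed.

Lemma phi_boundary x : boundary x -> phi x = 0.
Proof. by case=> y [_ ->]; rewrite (klinB phi_lin) phi_face subrr. Qed.

Lemma fixed_points_coker :
  [/\ (forall c x y, tau0 x = x -> tau0 y = y -> phi (c *: x + y) = c *: phi x + phi y),
      (forall z : Q, exists x, tau0 x = x /\ phi x = z) &
      (forall x, tau0 x = x -> (phi x = 0 <-> boundary x))].
Proof.
have [[psi [psi_lin psiE]] _] := Hq.2 _ _ sym_class_balanced.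
have [phiq [phiq_lin phiqE]] := quot_lift boundary0 boundary_linear phi_lin phi_boundary.
have phiqK z : phiq (psi z) = z.
  apply: (Hq.2 _ _ Hq.1).2 (phiq \o psi) id _ _ _ z => [||r m /=].
  - exact: klin_comp.
  - exact: klin_id.
  by rewrite psiE /sym_class phiqE phi_sym phiE.
have psi_phi x : psi (phi x) = cls (sym x).
  apply: (tensor_ext Ht0 (g1 := psi \o phi) (g2 := cls \o sym)) x => //.
  - exact: klin_comp.
  - by apply: klin_comp; [apply: quot_pi_linear | apply: symmetrize_linear].
  by move=> r m /=; rewrite phiE psiE.
split=> [c x y _ _ | z | x x_fix]; first exact: phi_lin.
  have [x clsx] := quot_pi_surj (psi z).
  exists (sym x); split; first exact: (symmetrize_fixed Htau0 tau0K half_tau).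
  by rewrite phi_sym -phiqE clsx phiqK.
split=> [phix0 | /phi_boundary //].
apply/(quot_pi_eq0 boundary0 boundary_linear).
by rewrite -(symmetrize_id half_addK x_fix) -psi_phi phix0 (klin0 psi_lin).
Qed.
End BarConstruction.

Theorem mainTheorem12
  (k : comNzRingType) (R : comAlgType k) (conj : R -> R)
  (M : lmodType k) (lm : R -> M -> M) (rm : M -> R -> M) (invM : M -> M)
  (Hconj : is_alg_involution conj)
  (H2 : exists h : R, 2%:R * h = 1)
  (Hflat : flat R)
  (HM : is_involutive_bimodule conj lm rm invM)
  (X0 : lmodType k) (t0 : R -> M -> X0) (Ht0 : is_tensor t0)
  (S : lmodType k) (s : R -> R -> S) (Hs : is_tensor s)
  (U : lmodType k) (u : S -> M -> U) (Hu : is_tensor u)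
  (X1 : lmodType k) (t1 : R -> U -> X1) (Ht1 : is_tensor t1)
  (d0 d1 : X1 -> X0) (Hd0 : klinear d0) (Hd1 : klinear d1)
  (Hd0t : forall r x y m, d0 (t1 r (u (s x y) m)) = t0 (y * r * x) m)
  (Hd1t : forall r x y m, d1 (t1 r (u (s x y) m)) = t0 r (lm x (rm m y)))
  (tau0 : X0 -> X0) (tau1 : X1 -> X1) (Htau0 : klinear tau0) (Htau1 : klinear tau1)
  (Htau0t : forall r m, tau0 (t0 r m) = t0 (conj r) (invM m))
  (Htau1t : forall r x y m,
      tau1 (t1 r (u (s x y) m)) = t1 (conj r) (u (s (conj y) (conj x)) (invM m)))
  (Q : lmodType k) (q : R -> M -> Q) (Hq : is_tensor_ie conj lm rm invM q) :
  exists phi : X0 -> Q,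
    [/\ (forall (c : k) x y, tau0 x = x -> tau0 y = y ->
           phi (c *: x + y) = c *: phi x + phi y),
        (forall z : Q, exists x, tau0 x = x /\ phi x = z) &
        (forall x, tau0 x = x ->
           (phi x = 0 <-> exists y, tau1 y = y /\ x = d0 y - d1 y))].
Proof.
have [h h_half] := H2.
have [t0b_l t0b_r] := tensor_bilinear Ht0.
have half_bilinear : kbilinear (fun r m => t0 (h * r) m).
  split=> [m c x y | r]; last exact: t0b_r.
  by rewrite mulrDr -scalerAr t0b_l.
have [half [half_lin halfE]] := tensor_lift Ht0 half_bilinear.
have [phi [phi_lin phiE]] := tensor_lift Ht0 Hq.1.1.
exists phi.
exact: (fixed_points_coker Hconj HM h_half Ht0 Hs Hu Ht1 Hd0 Hd1 Htau0 Htau1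
          Hd0t Hd1t Htau0t Htau1t half_lin halfE Hq phi_lin phiE).
Qed.
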